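(* Consider the OCP and its QP reformulation as in the context, with symmetry group $\mathcal G$ and orbits $\mathcal O(\mathcal A)$ of active sets $\mathcal A\subseteq\mathcal Q$. If an active set $\mathcal{A}\subseteq\mathcal Q$ is non-primary, then every element of $\mathcal{D}(\mathcal{A})=\{\mathcal{A}\cup\hat{\mathcal{A}} : \hat{\mathcal{A}}\subseteq\{\max(\mathcal{A})+1,\dots,q\}\}$ is non-primary.
   Context: The OCP: $\min\ \|x(N)\|_P^2+\sum_{k=0}^{N-1}(\|x(k)\|_Q^2+\|u(k)\|_R^2)$ subject to $x(k+1)=Ax(k)+Bu(k)$, $u(k)\in\mathcal{U}$, $x(k)\in\mathcal{X}$ ($k=0,\dots,N-1$), $x(N)\in\mathcal{T}$, with $\mathcal{U},\mathcal{X},\mathcal{T}$ compact full-dimensional polytopes containing the origin in their interiors, each given by its irredundant halfspace representation with right-hand side 1. Eliminating states gives constraints $GU\le Ex(0)+1^q$ indexed by $\mathcal Q=\{1,\dots,q\}$. The OCP is symmetric to an invertible pair $(\Theta,\Omega)$ if $\Theta A=A\Theta$, $\Theta B=B\Omega$, $\Theta\mathcal{X}=\mathcal{X}$, $\Omega\mathcal{U}=\mathcal{U}$, $\Theta\mathcal{T}=\mathcal{T}$, $\Theta^TQ\Theta=Q$, $\Omega^TR\Omega=R$, $\Theta^TP\Theta=P$; $\mathcal G$ is the set of all such pairs (a group under pairwise multiplication). For $(\Theta,\Omega)\in\mathcal G$, $\pi^{(\Theta,\Omega)}$ is the permutation of $\mathcal Q$ mapping $i$ to the (assumed unique) $j$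 with $G_{\{i\}}=G_{\{j\}}(I^N\otimes\Omega)$, $E_{\{i\}}=E_{\{j\}}\Theta$; $\Pi^{(\Theta,\Omega)}(\mathcal A)=\{\pi^{(\Theta,\Omega)}(i):i\in\mathcal A\}$; the orbit of $\mathcal A\subseteq\mathcal Q$ is $\mathcal O(\mathcal A)=\{\Pi^{(\Theta,\Omega)}(\mathcal A):(\Theta,\Omega)\in\mathcal G\}$. The primary active set of an orbit $\mathcal O$ is the $\mathcal A\in\mathcal O$ such that $\min(\mathcal A\setminus\mathring{\mathcal A})<\min(\mathring{\mathcal A}\setminus\mathcal A)$ for all $\mathring{\mathcal A}\in\mathcal O\setminus\{\mathcal A\}$ (the lexicographically smallest element); an active set is non-primary if it is not the primary active set of its orbit. For $\mathcal A=\emptyset$, $\max(\mathcal A)$ is taken as $0$. *)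

From HB Require Import structures.
From mathcomp Require Import all_boot all_order all_algebra.
From mathcomp Require Import mxtens.
From mathcomp Require Import reals.
Set Implicit Arguments. Unset Strict Implicit. Unset Printing Implicit Defensive.
Import Order.TTheory GRing.Theory Num.Theory.
Local Open Scope ring_scope.

Section OCP.
Variable R : realType.

Definition in_poly (p d : nat) (H : 'M[R]_(p, d)) (x : 'cV[R]_d) : Prop :=
  forall r : 'I_p, (H *m x) r 0 <= 1.

Definition poly_bounded (p d : nat) (H : 'M[R]_(p, d)) : Prop :=
  exists M : R, forall x, in_poly H x -> forall j : 'I_d, `|x j 0| <= M.

Definition poly_irredundant (p d : nat) (H : 'M[R]_(p, d)) : Prop :=
  forall r : 'I_p, exists x : 'cV[R]_d,
    1 < (H *m x) r 0 /\ forall r' : 'I_p, r' != r -> (H *m x) r' 0 <= 1.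

Definition poly_invariant (p d : nat) (H : 'M[R]_(p, d)) (Th : 'M[R]_d) : Prop :=
  forall y : 'cV[R]_d, in_poly H y <-> exists x, in_poly H x /\ y = Th *m x.

Definition ocp_symmetry (n m pu px pt : nat)
  (A : 'M[R]_n) (B : 'M[R]_(n, m))
  (Hu : 'M[R]_(pu, m)) (Hx : 'M[R]_(px, n)) (Ht : 'M[R]_(pt, n))
  (Q : 'M[R]_n) (Rw : 'M[R]_m) (P : 'M[R]_n)
  (Th : 'M[R]_n) (Om : 'M[R]_m) : Prop :=
  Th \in unitmx /\ Om \in unitmx /\ Th *m A = A *m Th /\ Th *m B = B *m Om /\
  poly_invariant Hx Th /\ poly_invariant Hu Om /\ poly_invariant Ht Th /\
  Th^T *m Q *m Th = Q /\ Om^T *m Rw *m Om = Rw /\ Th^T *m P *m Th = P.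

(* Index type of the constraints of the condensed QP:
   inl (inl (k, r)) : row r of u(k) \in U,      k = 0..N-1
   inl (inr (k, r)) : row r of x(k) \in X,      k = 0..N-1
   inr r            : row r of x(N) \in T. *)
Definition cidx (N pu px pt : nat) : finType :=
  (('I_N * 'I_pu) + ('I_N * 'I_px) + 'I_pt)%type.

(* Stacked input U = [u(0); ...; u(N-1)] : 'cV_(N*m); entry j of U is the
   component (mxtens_unindex j).2 of u((mxtens_unindex j).1). *)

(* For x(k) = A^k x0 + sum_{l<k} A^(k-1-l) B u(l), the row vector of
   coefficients of U in h x(k). *)
Definition pred_row (n m N : nat) (A : 'M[R]_n) (B : 'M[R]_(n, m))
  (h : 'rV[R]_n) (k : nat) : 'rV[R]_(N * m) :=
  \row_(j < N * m)
    (if ((mxtens_unindex j).1 < k)%N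
     then (h *m A ^+ (k.-1 - (mxtens_unindex j).1) *m B) 0 (mxtens_unindex j).2
     else 0).

Definition G_row (n m N pu px pt : nat) (A : 'M[R]_n) (B : 'M[R]_(n, m))
  (Hu : 'M[R]_(pu, m)) (Hx : 'M[R]_(px, n)) (Ht : 'M[R]_(pt, n))
  (c : cidx N pu px pt) : 'rV[R]_(N * m) :=
  match c with
  | inl (inl (k, r)) =>
      \row_(j < N * m) (if (mxtens_unindex j).1 == k
                        then Hu r (mxtens_unindex j).2 else 0)
  | inl (inr (k, r)) => pred_row N A B (row r Hx) k
  | inr r => pred_row N A B (row r Ht) N
  end.

(* Row of E for constraint c  (G U <= E x0 + 1) *)
Definition E_row (n N pu px pt : nat) (A : 'M[R]_n)
  (Hx : 'M[R]_(px, n)) (Ht : 'M[R]_(pt, n))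
  (c : cidx N pu px pt) : 'rV[R]_n :=
  match c with
  | inl (inl _) => 0
  | inl (inr (k, r)) => - (row r Hx *m A ^+ k)
  | inr r => - (row r Ht *m A ^+ N)
  end.

Definition Gmat (n m N pu px pt q : nat) (A : 'M[R]_n) (B : 'M[R]_(n, m))
  (Hu : 'M[R]_(pu, m)) (Hx : 'M[R]_(px, n)) (Ht : 'M[R]_(pt, n))
  (ord : 'I_q -> cidx N pu px pt) : 'M[R]_(q, N * m) :=
  \matrix_(i < q) G_row A B Hu Hx Ht (ord i).

Definition Emat (n N pu px pt q : nat) (A : 'M[R]_n)
  (Hx : 'M[R]_(px, n)) (Ht : 'M[R]_(pt, n))
  (ord : 'I_q -> cidx N pu px pt) : 'M[R]_(q, n) :=
  \matrix_(i < q) E_row A Hx Ht (ord i).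

Definition pi_rel (n m N q : nat) (G : 'M[R]_(q, N * m)) (E : 'M[R]_(q, n))
  (Th : 'M[R]_n) (Om : 'M[R]_m) (i j : 'I_q) : bool :=
  (row i G == row j G *m ((1%:M : 'M[R]_N) *t Om)) && (row i E == row j E *m Th).

Definition Pi_set (n m N q : nat) (G : 'M[R]_(q, N * m)) (E : 'M[R]_(q, n))
  (Th : 'M[R]_n) (Om : 'M[R]_m) (S : {set 'I_q}) : {set 'I_q} :=
  [set j | [exists i in S, pi_rel G E Th Om i j]].

End OCP.

(* minimum of a set of indices (value q for the empty set, never used
   in a comparison that matters since orbit elements have equal size) *)
Definition setmin (q : nat) (S : {set 'I_q}) : nat :=
  \big[minn/q]_(i in S) (i : nat).

Section Orbits.
Variable R : realType.
Local Open Scope ring_scope.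

Definition in_orbit (n m N q : nat) (sym : 'M[R]_n -> 'M[R]_m -> Prop)
  (G : 'M[R]_(q, N * m)) (E : 'M[R]_(q, n)) (S T : {set 'I_q}) : Prop :=
  exists Th Om, sym Th Om /\ T = Pi_set G E Th Om S.

Definition primary (n m N q : nat) (sym : 'M[R]_n -> 'M[R]_m -> Prop)
  (G : 'M[R]_(q, N * m)) (E : 'M[R]_(q, n)) (S : {set 'I_q}) : Prop :=
  forall T, in_orbit sym G E S T -> T != S ->
    (setmin (S :\: T) < setmin (T :\: S))%N.

Definition non_primary (n m N q : nat) (sym : 'M[R]_n -> 'M[R]_m -> Prop)
  (G : 'M[R]_(q, N * m)) (E : 'M[R]_(q, n)) (S : {set 'I_q}) : Prop :=
  ~ primary sym G E S.
End Orbits.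

From HB Require Import structures.
From mathcomp Require Import all_boot all_order all_algebra.
From mathcomp Require Import mxtens.
From mathcomp Require Import reals.
Import Order.TTheory GRing.Theory Num.Theory.
Local Open Scope ring_scope.

(* The statement is purely combinatorial: of the OCP data only the
   uniqueness of pi(i) is used.  Non-primarity of S gives a
   symmetry with image T = Pi(S) != S such that min (T :\: S) is at most
   min (S :\: T).  Since Pi is the image under a functional relation,
   #|T| <= #|S|, so S :\: T is nonempty and there is a first difference
   a = min (T :\: S) lying strictly below every element of S :\: T.  The
   same symmetry sends S :|: Shat to T' = Pi(S :|: Shat), which contains T
   (images are monotone).  Elements of Shat exceed all of S, hence exceed
   a; so a lies in T' :\: (S :|: Shat) while every element of
   (S :|: Shat) :\: T' is above a: T' witnesses that S :|: Shat is not
   primary either. *)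

Section SetMin.
Context {q : nat}.
Implicit Types (X : {set 'I_q}).

(* [setmin X] is a lower bound of X (the default q is not a neutral element
   of minn, so this goes by induction on the enumeration) ... *)
Lemma setmin_le {X} {x : 'I_q} : x \in X -> (setmin X <= x)%N.
Proof.
move=> xX; rewrite /setmin.
elim: (index_enum 'I_q) (mem_index_enum x) => [//|y s IH] /=.
rewrite inE big_cons => /orP [/eqP <-|xs]; first by rewrite xX geq_minl.
by case: ifP => _; [exact: leq_trans (geq_minr _ _) (IH xs) | exact: IH].
Qed.

Lemma setmin_ge {X} {a : nat} :
  (a <= q)%N -> (forall y : 'I_q, y \in X -> (a <= y)%N) -> (a <= setmin X)%N.
Proof.
move=> aq aX; rewrite /setmin; apply: (big_ind (fun v => a <= v)%N) => //.
by move=> u v au av; rewrite leq_min au av.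
Qed.

Lemma setmin_attained {X} :
  (setmin X < q)%N -> exists2 x : 'I_q, x \in X & (x : nat) = setmin X.
Proof.
rewrite /setmin; apply: (big_ind (fun v => v < q -> exists2 x : 'I_q,
  x \in X & (x : nat) = v)%N) => [|u v Hu Hv|i iX _]; first by rewrite ltnn.
- by case: (leqP u v) => _ /=; [exact: Hu | exact: Hv].
- by exists i.
Qed.

End SetMin.

Section RelImage.
Context {T : finType}.

Lemma rel_image_subset (r : rel T) {S1 S2 : {set T}} :
  S1 \subset S2 ->
  [set j | [exists i in S1, r i j]] \subset [set j | [exists i in S2, r i j]].
Proof.
move=> /subsetP S12; apply/subsetP => j; rewrite !inE => /existsP [i /andP [iS ij]].
by apply/existsP; exists i; rewrite S12.
Qed.

Lemma rel_image_card {r : rel T} (S : {set T}) :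
  (forall i j j', r i j -> r i j' -> j = j') ->
  (#|[set j | [exists i in S, r i j]]| <= #|S|)%N.
Proof.
move=> r_fun; pose f i := odflt i [pick j | r i j].
apply: leq_trans (leq_imset_card f S); apply: subset_leq_card.
apply/subsetP => j; rewrite inE => /existsP [i /andP [iS ij]].
apply/imsetP; exists i => //; rewrite /f.
by case: pickP => [j' ij' | /(_ j)]; [rewrite (r_fun _ _ _ ij ij') | rewrite ij].
Qed.

End RelImage.

Section FirstDifference.
Context {q : nat}.
Implicit Types (S T : {set 'I_q}).

Lemma lex_first_difference {S T} :
  (#|T| <= #|S|)%N -> T != S -> (setmin (T :\: S) <= setmin (S :\: T))%N ->
  exists a b : 'I_q, [/\ a \in T :\: S, b \in S :\: T &
                         forall b', b' \in S :\: T -> (a < b')%N].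
Proof.
move=> card_TS neq_TS lex_TS.
have [b bST] : exists b, b \in S :\: T.
  apply/set0Pn; apply: contraNN neq_TS; rewrite setD_eq0 => sub_ST.
  by rewrite eq_sym eqEcard sub_ST card_TS.
have [a aTS a_min] : exists2 a : 'I_q, a \in T :\: S & (a : nat) = setmin (T :\: S).
  apply: setmin_attained; apply: (leq_ltn_trans lex_TS).
  exact: leq_ltn_trans (setmin_le bST) (ltn_ord b).
exists a, b; split=> // b' b'ST.
have a_le_b' : (a <= b')%N by rewrite a_min (leq_trans lex_TS) ?setmin_le.
rewrite ltn_neqAle a_le_b' andbT.
apply: contraTneq aTS => /val_inj ->; move: b'ST.
by rewrite !inE => /andP [_ ->].
Qed.

Lemma lex_extend {S T T'} (Shat : {set 'I_q}) :
  (#|T| <= #|S|)%N -> T != S -> (setmin (T :\: S) <= setmin (S :\: T))%N ->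
  T \subset T' -> (forall j, j \in Shat -> forall i, i \in S -> (i < j)%N) ->
  T' != S :|: Shat /\
  (setmin (T' :\: (S :|: Shat)) <= setmin ((S :|: Shat) :\: T'))%N.
Proof.
move=> card_TS neq_TS lex_TS /subsetP sub_TT' Shat_above.
have [a [b [aTS bST a_below]]] := lex_first_difference card_TS neq_TS lex_TS.
have bS : b \in S by move: bST; rewrite inE => /andP [].
have a_notin_Shat : a \notin Shat.
  by apply: contraTN (a_below _ bST) => /Shat_above /(_ _ bS) /ltnW; rewrite leqNgt.
have aT'S : a \in T' :\: (S :|: Shat).
  by move: aTS; rewrite !inE (negPf a_notin_Shat) orbF => /andP [-> /sub_TT' ->].
split.
  by apply: contraTneq aT'S => ->; rewrite setDv inE.
apply: leq_trans (setmin_le aT'S) _; apply: setmin_ge; first exact: ltnW.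
move=> y; rewrite !inE => /andP [yT' /orP [yS | yShat]]; apply: ltnW.
- apply: a_below; rewrite inE yS andbT.
  by apply: contraNN yT' => /sub_TT'.
- exact: ltn_trans (a_below _ bST) (Shat_above _ yShat _ bS).
Qed.

End FirstDifference.

Theorem theorem4 (R : realType) (n m N pu px pt q : nat)
  (A : 'M[R]_n) (B : 'M[R]_(n, m))
  (Hu : 'M[R]_(pu, m)) (Hx : 'M[R]_(px, n)) (Ht : 'M[R]_(pt, n))
  (Q : 'M[R]_n) (Rw : 'M[R]_m) (P : 'M[R]_n)
  (ord : 'I_q -> cidx N pu px pt) :
  poly_bounded Hu -> poly_bounded Hx -> poly_bounded Ht ->
  poly_irredundant Hu -> poly_irredundant Hx -> poly_irredundant Ht ->
  bijective ord ->
  let G := Gmat A B Hu Hx Ht ord in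
  let E := Emat A Hx Ht ord in
  let sym := ocp_symmetry A B Hu Hx Ht Q Rw P in
  (forall Th Om, sym Th Om -> forall i : 'I_q,
      exists! j : 'I_q, pi_rel G E Th Om i j) ->
  forall S : {set 'I_q}, non_primary sym G E S ->
  forall Shat : {set 'I_q},
    (forall j, j \in Shat -> forall i, i \in S -> (i < j)%N) ->
    non_primary sym G E (S :|: Shat).
Proof.
move=> _ _ _ _ _ _ _ G E sym pi_unique S S_nonprimary Shat Shat_above SShat_primary.
(* Contrapositive: the same symmetry refutes primarity of S and S :|: Shat. *)
apply: S_nonprimary => T [Th [Om [symThOm ->]]] neq_TS.
rewrite ltnNge; apply/negP => lex_TS.
have pi_fun i j j' : pi_rel G E Th Om i j -> pi_rel G E Th Om i j' -> j = j'.
  by have [k [_ k_uniq]] := pi_unique Th Om symThOm i => /k_uniq <- /k_uniq.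
have [neq_T'S lex_T'S] := lex_extend Shat (rel_image_card S pi_fun) neq_TS lex_TS
  (rel_image_subset (pi_rel G E Th Om) (subsetUl S Shat)) Shat_above.
have := SShat_primary _ (ex_intro _ Th (ex_intro _ Om (conj symThOm erefl))) neq_T'S.
by rewrite ltnNge lex_T'S.
Qed.
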